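(* Let $X,Y$ be a section-pair, let $t\ge1$ be odd, and let $X_1,Y_1;\dots;X_t,Y_t$ be subsection pairs with the $X_i$ pairwise vertex-disjoint and the $Y_i$ pairwise vertex-disjoint, such that for all $1\le i<j\le t$, $X_i$ is above $X_j$ and $Y_i$ is below $Y_j$. Let $d_1,\dots,d_t\ge1$ be integers. Suppose that for each $1\le i\le t$ there are two paths $Q_i^R,Q_i^B$ in $H(X_i,Y_i)$ with $|Q_i^R|-|Q_i^B|\ge d_i$, which both go between $x_i^{t}$ and $y_i^{t}$ if $i$ is odd, and both go between $x_i^{b}$ and $y_i^{b}$ if $i$ is even. Let $D:=\max_{1\le i\le t}(|X_i|+|Y_i|)$. Then there are paths $P_1,\dots,P_{(t+3)/2}$ in $H(X,Y)$ between $x^{t}$ and $y^{t}$ such that $|P_{(t+3)/2}|-|P_1|\ge\sum_{i=1}^t d_i$ and $1\le |P_{i+1}|-|P_i|\le 2D$ for every $1\le i\le (t+1)/2$.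
   Context: A section-pair in a graph $G$ is a pair $X,Y$ of vertex-disjoint paths; the two endpoints of $X$ are designated its top $x^{t}$ and bottom $x^{b}$, and those of $Y$ its top $y^t$ and bottom $y^b$. For distinct $x_1,x_2\in X$, $x_1$ is above $x_2$ if $x_1$ is closer to $x^t$ along $X$ than $x_2$, otherwise below; similarly in $Y$. For vertex sets $A,B\subseteq X$ (or $\subseteq Y$), $A$ is above (resp. below) $B$ if every vertex of $A$ is above (resp. below) every vertex of $B$. A chord is an edge of $G$ with one endpoint in $X$ and one in $Y$. A subsection pair of $X,Y$ is a section-pair $X',Y'$ where $X'$ is a subpath of $X$ and $Y'$ a subpath of $Y$, with top of $X'$ its endpoint closer to $x^t$ and bottom the other one (similarly for $Y'$); $x_i^t,x_i^b,y_i^t,y_i^b$ denote the tops and bottoms of $X_i,Y_i$. For a section-pair $X',Y'$, $H(X',Y')$ is the graph with vertex set $V(X')\cup V(Y')$ whose edges are the edges of $X'$, the edges of $Y'$, and the chords with one endpoint in $X'$ and one in $Y'$. $|P|$ denotes the number of edges of a path $P$. *)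

From mathcomp Require Import all_boot all_order all_algebra.
Set Implicit Arguments. Unset Strict Implicit. Unset Printing Implicit Defensive.

(* A simple graph: a symmetric irreflexive relation e on a finite type V.
   A path is a nonempty duplicate-free sequence of vertices whose consecutive
   vertices are adjacent; its top is its head and its bottom its last vertex.
   |P| (number of edges) = size P - 1. *)
Section Defs.
Variable V : finType.

Definition is_path (adj : rel V) (p : seq V) : bool :=
  if p is x :: q then uniq p && path adj x q else false.

Definition path_between (adj : rel V) (p : seq V) (a b : V) : bool :=
  if p is x :: q then
    is_path adj p && (((x == a) && (last x q == b)) || ((x == b) && (last x q == a)))
  else false.

Definition section_pair (e : rel V) (X Y : seq V) : bool :=
  [&& is_path e X, is_path e Y & all (fun v => v \notin Y) X].

Definition subsection_pair (e : rel V) (X Y X' Y' : seq V) : bool :=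
  [&& section_pair e X' Y', infix X' X & infix Y' Y].

Definition above (X A B : seq V) : Prop :=
  forall u v, u \in A -> v \in B -> index u X < index v X.
Definition below (X A B : seq V) : Prop :=
  forall u v, u \in A -> v \in B -> index v X < index u X.

Definition path_edge (s : seq V) (u v : V) : bool :=
  ((u, v) \in zip s (behead s)) || ((v, u) \in zip s (behead s)).

Definition H_adj (e : rel V) (X Y : seq V) : rel V :=
  fun u v => [|| path_edge X u v, path_edge Y u v |
               e u v && (((u \in X) && (v \in Y)) || ((u \in Y) && (v \in X)))].

Definition H_path_between (e : rel V) (X Y p : seq V) (a b : V) : bool :=
  path_between (H_adj e X Y) p a b && all (fun v => (v \in X) || (v \in Y)) p.

Definition H_path_tops (e : rel V) (X Y p : seq V) : Prop :=
  exists x X0 y Y0, [/\ X = x :: X0, Y = y :: Y0 & H_path_between e X Y p x y].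

Definition H_path_bottoms (e : rel V) (X Y p : seq V) : Prop :=
  exists X0 x Y0 y, [/\ X = rcons X0 x, Y = rcons Y0 y & H_path_between e X Y p x y].

End Defs.

From mathcomp Require Import all_boot all_order all_algebra.
From mathcomp Require Import zify.
Set Implicit Arguments. Unset Strict Implicit. Unset Printing Implicit Defensive.
Import Order.TTheory GRing.Theory Num.Theory.

(* Since the X_i descend along X and
   the Y_i ascend along Y, a single walk in H(X,Y) can go down X from x^t to
   the top of X_1, cross through a piece of section 1 to the top of Y_1, go up
   Y to the bottom of Y_2, cross through a piece of section 2 to the bottom of
   X_2, go down X to the top of X_3, and so on, finally going up Y from the
   top of Y_t to y^t.  Choosing in every section either the longer path Q_i^R
   or the shorter path Q_i^B gives 2^t such zigzags; the connecting segments
   do not depend on the choices, so their lengths differ exactly by the sums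
   of the chosen differences |Q_i^R| - |Q_i^B|.  The paths P_m use Q_i^R
   exactly for i <= 2m - 3, so consecutive ones differ by one or two such
   differences, each between d_i >= 1 and D. *)

Section SubpathFacts.
Variable V : finType.
Implicit Types (s p X : seq V) (u v : V).

Lemma path_edge_nth s x0 k : k.+1 < size s ->
  path_edge s (nth x0 s k) (nth x0 s k.+1).
Proof.
rewrite /path_edge => ltk; apply/orP; left.
elim: s k ltk => [|x [|y s] IH] [|k] //= ltk; first by rewrite mem_head.
by rewrite in_cons (IH k ltk) orbT.
Qed.

Lemma path_edge_sym s u v : path_edge s u v = path_edge s v u.
Proof. by rewrite /path_edge orbC. Qed.

Lemma zip_behead_catr s b :
  {subset zip s (behead s) <= zip (s ++ b) (behead (s ++ b))}.
Proof.
elim: s => [|x [|y s] IH] //= w; rewrite !in_cons => /orP [-> //|/IH ->].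
by rewrite orbT.
Qed.

Lemma zip_behead_catl a s :
  {subset zip s (behead s) <= zip (a ++ s) (behead (a ++ s))}.
Proof.
elim: a => //= x a IH w /IH; case: (a ++ s) => //= y r H.
by rewrite in_cons H orbT.
Qed.

Lemma path_edge_infix s p u v : infix s p -> path_edge s u v -> path_edge p u v.
Proof.
case/infixP=> a [b ->]; rewrite /path_edge.
have sub w : w \in zip s (behead s) -> w \in zip (a ++ s ++ b) (behead (a ++ s ++ b)).
  by move/(zip_behead_catr b)/zip_behead_catl.
by case/orP=> /sub ->; rewrite ?orbT.
Qed.

Definition wstart x0 X s := index (head x0 s) X.
Definition wend x0 X s := wstart x0 X s + (size s).-1.

Lemma infix_window x0 X s : uniq X -> infix s X -> s != [::] ->
  [/\ wstart x0 X s <= wend x0 X s < size X,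
      nth x0 X (wstart x0 X s) = head x0 s,
      nth x0 X (wend x0 X s) = last x0 s &
      forall v, v \in s -> (v \in X) && (wstart x0 X s <= index v X <= wend x0 X s)].
Proof.
move=> uX /infixP [a [b defX]]; case: s defX => [|h s] // defX _.
have ua : uniq (a ++ (h :: s) ++ b) by rewrite -defX.
have idx v : v \in h :: s -> index v X = size a + index v (h :: s).
  move=> vs; rewrite defX index_cat ifN ?index_cat ?vs //.
  by apply: contraL ua => va; rewrite cat_uniq; apply/and3P=> -[_ /hasP []];
    exists v; rewrite // mem_cat vs.
have nthX k : k < (size s).+1 -> nth x0 X (size a + k) = nth x0 (h :: s) k.
  by move=> ltk; rewrite defX nth_cat ltnNge leq_addr /= addKn -cat_cons nth_cat ltk.
rewrite /wend /wstart /= idx ?mem_head //= eqxx addn0; split.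
- by rewrite leq_addr defX !size_cat /=; lia.
- by rewrite -[size a]addn0 nthX.
- by rewrite nthX // nth_last.
- move=> v vs; rewrite idx // defX !mem_cat vs orbT /=.
  by have := index_mem v (h :: s); rewrite vs /= => lt; lia.
Qed.

Lemma above_window x0 X s1 s2 : uniq X -> infix s1 X -> infix s2 X ->
  s1 != [::] -> s2 != [::] -> above X s1 s2 -> wend x0 X s1 < wstart x0 X s2.
Proof.
move=> uX i1 i2 n1 n2 ab; have [/andP [_ lt1] _ l1 _] := infix_window x0 uX i1 n1.
have l1s : last x0 s1 \in s1 by case: (s1) n1 => //= ? ? _; exact: mem_last.
have h2s : head x0 s2 \in s2 by case: (s2) n2 => // ? ? _; rewrite mem_head.
by have := ab _ _ l1s h2s; rewrite -l1 index_uniq.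
Qed.

End SubpathFacts.

Section OrientedPaths.
Variable V : finType.
Implicit Types (R : rel V) (p : seq V) (a b : V).

Lemma is_path_uniq R p : is_path R p -> uniq p.
Proof. by case: p => // x s /andP []. Qed.

Definition path_from R p a b :=
  if p is x :: r then [&& x == a, is_path R p & last x r == b] else false.

Lemma path_betweenE R p a b :
  path_between R p a b = path_from R p a b || path_from R p b a.
Proof.
case: p => // x r; rewrite /path_between /path_from.
by case: (is_path R _); case: (x == a); case: (x == b).
Qed.

Lemma path_from_rev R p a b : symmetric R -> path_from R p a b -> path_from R (rev p) b a.
Proof.
move=> Rs; case: p => // x r /and3P [/eqP -> /andP [ur pr] /eqP lr].
have Erev : rev (a :: r) = b :: rev (belast a r) by rewrite lastI rev_rcons lr.
have ur' : uniq (b :: rev (belast a r)) by rewrite -Erev rev_uniq.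
have pr' : path R b (rev (belast a r)).
  by rewrite -lr rev_path (@eq_path _ _ R) // => u v; rewrite Rs.
have lr' : last b (rev (belast a r)) = a.
  by have := congr1 (last b) Erev; rewrite rev_cons last_rcons /= => <-.
by rewrite Erev /path_from /is_path eqxx ur' pr' lr' eqxx.
Qed.

Definition orient p a := if head a p == a then p else rev p.

Lemma orient_path_from R p a b : symmetric R ->
  path_between R p a b -> path_from R (orient p a) a b.
Proof.
move=> Rs; rewrite path_betweenE /orient => /orP [pab|pba].
  by case: p pab => // x r pab; case/and3P: (pab) => /eqP xa _ _; subst x; rewrite /= eqxx.
case: ifP => [|_]; last exact: path_from_rev.
(* p starts at a and goes from b to a: then a = b. *)
case: p pba => // x r pba /= /eqP xa; subst x.
by case/and3P: (pba) => /eqP E _ _; move: pba; rewrite -E.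
Qed.

Lemma mem_orient p a : orient p a =i p.
Proof. by rewrite /orient; case: ifP => // _ v; rewrite mem_rev. Qed.

Lemma size_orient p a : size (orient p a) = size p.
Proof. by rewrite /orient; case: ifP; rewrite ?size_rev. Qed.

Lemma path_between_sub R R' p a b :
  subrel R R' -> path_between R p a b -> path_between R' p a b.
Proof.
move=> sub; case: p => // x r /andP [/andP [ur pr] ends].
by rewrite /path_between /is_path ur (sub_path sub pr).
Qed.

End OrientedPaths.

Section HGraph.
Variables (V : finType) (e : rel V).
Implicit Types (X Y Xi Yi p w : seq V).

Lemma H_adj_sym X Y : symmetric e -> symmetric (H_adj e X Y).
Proof.
move=> es u v; rewrite /H_adj path_edge_sym (path_edge_sym Y) es.
by case: (u \in X); case: (v \in X); case: (u \in Y); case: (v \in Y).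
Qed.

Lemma H_adj_infix X Y Xi Yi :
  infix Xi X -> infix Yi Y -> subrel (H_adj e Xi Yi) (H_adj e X Y).
Proof.
move=> iX iY u v; rewrite /H_adj.
case/or3P => [/(path_edge_infix iX) -> // | /(path_edge_infix iY) -> | /andP [-> uv]];
  rewrite ?orbT //; apply/or3P/Or33.
have sX z : z \in Xi -> z \in X by apply: mem_infix.
have sY z : z \in Yi -> z \in Y by apply: mem_infix.
by case/orP: uv => [/andP [/sX -> /sY ->] // | /andP [/sY -> /sX ->]]; rewrite orbT.
Qed.

Lemma H_path_size Xi Yi p a b :
  H_path_between e Xi Yi p a b -> a != b -> 2 <= size p <= size Xi + size Yi.
Proof.
case/andP => pab inXY ab; apply/andP; split.
  case: p pab {inXY} => [|x [|y s]] //= /orP [] /andP [/eqP xa /eqP xb];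
  by rewrite -xa -xb eqxx in ab.
rewrite -size_cat; apply: uniq_leq_size.
  by case: p pab {inXY} => // x s /andP [/andP []].
by move=> v /(allP inXY); rewrite mem_cat.
Qed.

Lemma H_path_ends (top : bool) x0 Xi Yi p :
  (if top then H_path_tops e Xi Yi p else H_path_bottoms e Xi Yi p) ->
  H_path_between e Xi Yi p (if top then head x0 Xi else last x0 Yi)
                           (if top then head x0 Yi else last x0 Xi).
Proof.
case: top => [[x [X0 [y [Y0 [-> -> //]]]]]|[X0 [x [Y0 [y [-> ->]]]]]].
by rewrite !last_rcons /H_path_between path_betweenE orbC -path_betweenE.
Qed.

Lemma H_path_tops_intro x0 X Y w : X != [::] -> Y != [::] ->
  is_path (H_adj e X Y) (nth x0 X 0 :: w) -> last (nth x0 X 0) w = nth x0 Y 0 ->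
  all (fun v => (v \in X) || (v \in Y)) (nth x0 X 0 :: w) ->
  H_path_tops e X Y (nth x0 X 0 :: w).
Proof.
case: X => // x X0 _; case: Y => // y Y0 _ pw lw inXY; exists x, X0, y, Y0.
by split => //; rewrite /H_path_between inXY andbT /path_between pw lw /= !eqxx.
Qed.

End HGraph.

Section Traces.
Variable T : eqType.
Implicit Types (f : nat -> T) (R : rel T).

Definition trace f m n := [seq f k | k <- iota m.+1 n].

Lemma trace_path R f m n :
  (forall k, m <= k < m + n -> R (f k) (f k.+1)) -> path R (f m) (trace f m n).
Proof.
elim: n m => [|n IH] m fR //=; rewrite fR ?addnS ?leqnn ?leq_addr //=.
by apply: IH => k /andP [? ?]; apply: fR; lia.
Qed.

Lemma last_trace f m n : last (f m) (trace f m n) = f (m + n).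
Proof. by elim: n m => [|n IH] m /=; rewrite ?addn0 ?IH ?addnS. Qed.

Lemma mem_trace f m n v : v \in trace f m n -> exists2 k, m < k <= m + n & v = f k.
Proof. by case/mapP => k; rewrite mem_iota => ltk ->; exists k => //; lia. Qed.

Lemma trace_uniq f m n :
  {in [pred k | m < k <= m + n] &, injective f} -> uniq (trace f m n).
Proof.
move=> finj; rewrite map_inj_in_uniq ?iota_uniq // => a b.
by rewrite !mem_iota => ? ?; apply: finj; rewrite inE; lia.
Qed.

End Traces.

(* The zigzag, abstractly: R is a relation, X and Y are sequences, and the
   pieces i = 1..t live in the windows [xt i, xb i] of X and [yt i, yb i] of Y
   (positions of the tops and bottoms of X_i and Y_i). *)
Section Zigzag.
Variables (V : eqType) (x0 : V) (R : rel V) (X Y : seq V) (t : nat).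
Variables (xt xb yt yb : nat -> nat).

(* downX a b lists X[a+1], ..., X[b]: going down X from position a to b;
   upY a b lists Y[a-1], ..., Y[b]: going up Y from position a to b. *)
Definition downX a b := trace (nth x0 X) a (b - a).
Definition upY a b := trace (fun k => nth x0 Y (a - k)) 0 (a - b).

Definition entry i := if odd i then nth x0 X (xt i) else nth x0 Y (yb i).
Definition exit i := if odd i then nth x0 Y (yt i) else nth x0 X (xb i).
Definition window i v :=
  ((v \in X) && (xt i <= index v X <= xb i)) || ((v \in Y) && (yt i <= index v Y <= yb i)).
Definition piece i q :=
  if q is y :: r then [&& y == entry i, uniq q, path R y r, last y r == exit i
                        & all (window i) q] else false.

Definition reachX n := if n is 0 then 0 else xb n.
Definition reachY n := if n is 0 then size Y else yt n.
Definition position n := if n is 0 then nth x0 X 0 else exit n.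

Definition connector i :=
  if odd i then downX (reachX i.-1) (xt i) else upY (yt i.-1) (yb i).

(* The walk through the first n pieces q 1, ..., q n, without its start vertex. *)
Fixpoint walk (q : nat -> seq V) n :=
  if n is n'.+1 then walk q n' ++ connector n ++ behead (q n) else [::].

Definition zigzag q := nth x0 X 0 :: walk q t ++ upY (yt t) 0.

Definition admissible q := forall i, 1 <= i <= t -> piece i (q i).

(* Pieces are nonempty, so dropping their entry vertex removes one vertex. *)
Lemma piece_size i q : piece i q -> 0 < size q.
Proof. by case: q. Qed.

(* The connectors do not depend on the chosen pieces, so the lengths of two
   zigzags differ by the sum of the differences of their pieces. *)
Lemma walk_size_diff q1 q2 n : admissible q1 -> admissible q2 -> n <= t ->
  ((size (walk q1 n))%:Z - (size (walk q2 n))%:Z =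
   \sum_(1 <= i < n.+1) ((size (q1 i))%:Z - (size (q2 i))%:Z))%R.
Proof.
move=> adm1 adm2; elim: n => [|n IH] nt; first by rewrite big_geq.
have it : 1 <= n.+1 <= t by rewrite nt.
have := piece_size (adm1 _ it); have := piece_size (adm2 _ it).
rewrite big_nat_recr //= -IH ?(ltnW nt) // !size_cat !size_behead; lia.
Qed.

Lemma zigzag_size_diff q1 q2 : admissible q1 -> admissible q2 ->
  ((size (zigzag q1))%:Z - (size (zigzag q2))%:Z =
   \sum_(1 <= i < t.+1) ((size (q1 i))%:Z - (size (q2 i))%:Z))%R.
Proof.
move=> adm1 adm2; rewrite -(walk_size_diff adm1 adm2 (leqnn t)) /zigzag /= !size_cat; lia.
Qed.

Hypothesis X_uniq : uniq X.
Hypothesis Y_uniq : uniq Y.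
Hypothesis XY_disjoint : forall v, v \in X -> v \notin Y.
Hypothesis R_down_X : forall k, k.+1 < size X -> R (nth x0 X k) (nth x0 X k.+1).
Hypothesis R_up_Y : forall k, k.+1 < size Y -> R (nth x0 Y k.+1) (nth x0 Y k).
Hypothesis X_windows : forall i, 1 <= i <= t -> xt i <= xb i < size X.
Hypothesis Y_windows : forall i, 1 <= i <= t -> yt i <= yb i < size Y.
Hypothesis windows_ordered : forall i, 1 <= i < t -> xb i < xt i.+1 /\ yb i.+1 < yt i.
Hypothesis t_odd : odd t.

Lemma YX_disjoint v : v \in Y -> v \notin X.
Proof. by apply: contraL => /XY_disjoint. Qed.

(* The part of X u Y already used by the walk: X from its top down to
   position a, and Y from position b down to its bottom. *)
Definition explored a b v :=
  ((v \in X) && (index v X <= a)) || ((v \in Y) && (b <= index v Y)).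

Definition explores a b x w :=
  [&& uniq (x :: w), path R x w & all (explored a b) (x :: w)].

Lemma explored_mono a b a' b' v :
  a <= a' -> b' <= b -> explored a b v -> explored a' b' v.
Proof.
rewrite /explored => aa bb /orP [/andP [-> ?]|/andP [-> ?]]; apply/orP; [left|right]; lia.
Qed.

Lemma explores_cat a b a' b' x w s :
  explores a b x w -> path R (last x w) s -> uniq s ->
  all (predC (explored a b)) s -> all (explored a' b') s -> a <= a' -> b' <= b ->
  explores a' b' x (w ++ s).
Proof.
move=> /and3P [uw pw ew] ps us fresh es aa bb; apply/and3P; split.
- rewrite -cat_cons cat_uniq uw us andbT; apply/hasP => -[v vs vw].
  by move/allP: fresh => /(_ v vs) /negP; apply; apply: (allP ew).
- by rewrite cat_path pw.
- rewrite -cat_cons all_cat es andbT; apply/allP => v vw.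
  by apply: explored_mono aa bb _; apply: (allP ew).
Qed.

Lemma downX_step a b a' x w :
  explores a b x w -> last x w = nth x0 X a -> a <= a' < size X ->
  explores a' b x (w ++ downX a a') /\ last x (w ++ downX a a') = nth x0 X a'.
Proof.
move=> ex lw /andP [aa' a'X]; split; last first.
  by rewrite last_cat lw last_trace subnKC.
have inX k : a < k <= a + (a' - a) -> nth x0 X k \in X by move=> ?; apply: mem_nth; lia.
apply: explores_cat ex _ _ _ _ (aa') (leqnn _).
- by rewrite lw; apply: trace_path => k ?; apply: R_down_X; lia.
- apply: trace_uniq => i j; rewrite !inE => ? ? /eqP.
  by rewrite nth_uniq //; [move/eqP | lia | lia].
- apply/allP => _ /mem_trace [k kr ->]; have kX := inX k kr.
  by rewrite /= /explored kX (negbTE (XY_disjoint kX)) index_uniq //=; lia.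
- apply/allP => _ /mem_trace [k kr ->]; have kX := inX k kr.
  by rewrite /explored kX index_uniq //=; lia.
Qed.

Lemma upY_step a b b' x w :
  explores a b x w -> last x w = nth x0 Y b -> b' <= b < size Y ->
  explores a b' x (w ++ upY b b') /\ last x (w ++ upY b b') = nth x0 Y b'.
Proof.
move=> ex lw /andP [bb' bY].
have lw0 : last x w = nth x0 Y (b - 0) by rewrite subn0.
split; last first.
  by rewrite last_cat lw0 (last_trace (fun k => nth x0 Y (b - k))); congr nth; lia.
have inY k : 0 < k <= 0 + (b - b') -> nth x0 Y (b - k) \in Y by move=> ?; apply: mem_nth; lia.
apply: explores_cat ex _ _ _ _ (leqnn _) (bb').
- rewrite lw0; apply: (trace_path (f := fun k => nth x0 Y (b - k))) => k ?.
  have -> : b - k = (b - k.+1).+1 by lia.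
  by apply: R_up_Y; lia.
- apply: trace_uniq => i j; rewrite !inE => ? ? /eqP.
  by rewrite nth_uniq //; [move/eqP; lia | lia | lia].
- apply/allP => _ /mem_trace [k kr ->]; have kY := inY k kr.
  by rewrite /= /explored kY (negbTE (YX_disjoint kY)) index_uniq //=; lia.
- apply/allP => _ /mem_trace [k kr ->]; have kY := inY k kr.
  by rewrite /explored kY (negbTE (YX_disjoint kY)) index_uniq //=; lia.
Qed.

(* Appending the i-th piece to a walk ending at its entry; the new vertices
   are fresh because the walk has not yet explored the windows of i beyond
   the entry vertex. *)
Lemma piece_step i q a b x w :
  1 <= i <= t -> piece i q -> explores a b x w -> last x w = entry i ->
  (if odd i then a <= xt i /\ yb i < b else a < xt i /\ yb i <= b) ->
  a <= xb i -> yt i <= b ->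
  explores (xb i) (yt i) x (w ++ behead q) /\ last x (w ++ behead q) = exit i.
Proof.
move=> it; case: q => // _ r /and5P [/eqP -> /andP [enr ur] pr /eqP lr win].
move=> ex lw ab abx ayb; split; last by rewrite last_cat lw.
have [/andP [? ?] /andP [? ?]] := (X_windows it, Y_windows it).
have winr v : v \in r -> window i v by move=> vr; apply: (allP win); rewrite inE vr orbT.
apply: explores_cat ex _ ur _ _ abx ayb; first by rewrite lw.
- apply/allP => v vr /=; have v_entry : v != entry i by apply: contraNneq enr => <-.
  move: (winr v vr) v_entry; rewrite /window /explored /entry.
  case/orP => /andP [vX ?];
    rewrite vX ?(negbTE (XY_disjoint vX)) ?(negbTE (YX_disjoint vX)) /=.
  + case: (odd i) ab => -[? ?] ve; last lia.
    suff : index v X != xt i by lia.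
    by apply: contra ve => /eqP <-; rewrite nth_index.
  + case: (odd i) ab => -[? ?] ve; first lia.
    suff : index v Y != yb i by lia.
    by apply: contra ve => /eqP <-; rewrite nth_index.
- apply/allP => v /winr; rewrite /window /explored.
  by case/orP => /andP [-> ?]; apply/orP; [left|right]; lia.
Qed.

Lemma t_pos : 0 < t.
Proof. by rewrite lt0n; apply: contraTneq t_odd => ->. Qed.

Lemma reach_before n : n < t -> reachX n <= xt n.+1 /\ yb n.+1 < reachY n.
Proof.
case: n => [|n] nt /=; first by have /andP [_ ?] := Y_windows (i := 1) t_pos.
by have [? ?] := windows_ordered (i := n.+1) nt; split; [apply: ltnW|].
Qed.

Lemma position_even n : ~~ odd n -> position n = nth x0 X (reachX n).
Proof. by case: n => //= n /negbTE on; rewrite /exit /= on. Qed.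

Lemma position_odd n : odd n -> position n = nth x0 Y (yt n).
Proof. by case: n => //= n on; rewrite /exit /= on. Qed.

Lemma walk_explores q n : admissible q -> n <= t ->
  explores (reachX n) (reachY n) (nth x0 X 0) (walk q n) /\
  last (nth x0 X 0) (walk q n) = position n.
Proof.
move=> adm; elim: n => [|n IH] nt.
  have /andP [_ ?] := X_windows (i := 1) t_pos.
  by rewrite /explores /= /explored mem_nth ?index_uniq //; lia.
have [ex lw] := IH (ltnW nt); have it : 1 <= n.+1 <= t by rewrite nt.
have [/andP [? ?] /andP [? ?]] := (X_windows it, Y_windows it).
have [hX hY] := reach_before nt.
rewrite /= catA /connector; case: ifP => on.
- rewrite position_even in lw; last by rewrite -oddS on.
  have bnd : reachX n <= xt n.+1 < size X by lia.
  have [ex1 lw1] := downX_step ex lw bnd.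
  by apply: piece_step (adm _ it) ex1 _ _ _ _; rewrite ?on ?lw1 /entry ?on //; lia.
- have n0 : 0 < n by case: (n) on.
  rewrite position_odd in lw; last by move: on => /= /negbFE.
  have [rx ry] : reachX n = xb n /\ reachY n = yt n by case: (n) n0.
  rewrite rx ry in ex.
  have [? ?] : xb n < xt n.+1 /\ yb n.+1 < yt n by apply: windows_ordered; lia.
  have /andP [? ?] : yt n <= yb n < size Y by apply: Y_windows; lia.
  have bnd : yb n.+1 <= yt n < size Y by lia.
  have [ex1 lw1] := upY_step ex lw bnd.
  by apply: piece_step (adm _ it) ex1 _ _ _ _; rewrite ?on ?lw1 /entry ?on //; lia.
Qed.

Lemma zigzag_explores q : admissible q ->
  explores (xb t) 0 (nth x0 X 0) (walk q t ++ upY (yt t) 0) /\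
  last (nth x0 X 0) (walk q t ++ upY (yt t) 0) = nth x0 Y 0.
Proof.
move=> adm; have [ex lw] := walk_explores adm (leqnn t).
have /andP [? ?] : yt t <= yb t < size Y by apply: Y_windows; rewrite t_pos leqnn.
rewrite position_odd // in lw.
have [rx ry] : reachX t = xb t /\ reachY t = yt t by case: (t) t_pos.
rewrite rx ry in ex; apply: upY_step ex lw _; lia.
Qed.

End Zigzag.

Section ThresholdSums.
Local Open Scope ring_scope.

Lemma sum_threshold (F G : nat -> int) n j k : (j <= k <= n)%N ->
  \sum_(1 <= i < n.+1) ((if (i <= k)%N then F i else G i) - (if (i <= j)%N then F i else G i))
  = \sum_(j.+1 <= i < k.+1) (F i - G i).
Proof.
move=> /andP [jk kn].
have jn : (j <= n)%N := leq_trans jk kn.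
rewrite (@big_cat_nat _ _ _ j.+1) ?ltnS // (@big_cat_nat _ _ _ k.+1 j.+1) ?ltnS //.
rewrite -[RHS]addr0 -[RHS]add0r.
congr (_ + (_ + _)).
- rewrite big_nat_cond big1 // => i /andP [/andP [_]]; rewrite ltnS => ij _.
  by rewrite ij (leq_trans ij jk) subrr.
- apply: eq_big_nat => i /andP [ji]; rewrite ltnS => ik; rewrite ik ifN //; lia.
- rewrite big_nat_cond big1 // => i /andP [/andP [ki _] _].
  by rewrite !ifN ?subrr //; lia.
Qed.

Lemma short_sum_bounds (F : nat -> int) (D : int) j k : (j < k <= j.+2)%N ->
  (forall i, (j < i <= k)%N -> 1 <= F i <= D) ->
  1 <= \sum_(j.+1 <= i < k.+1) F i <= 2 * D.
Proof.
move=> jk FD; have /andP [? ?] : 1 <= F j.+1 <= D by apply: FD; lia.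
have [->|kE] : k = j.+1 \/ k = j.+2 by lia.
  by rewrite big_nat1; lia.
have /andP [? ?] : 1 <= F j.+2 <= D by apply: FD; lia.
have -> : \sum_(j.+1 <= i < k.+1) F i = F j.+1 + F j.+2.
  by rewrite kE big_nat_recr // big_nat1.
lia.
Qed.

End ThresholdSums.

(* Finite choice: witnesses for the indices 1..n can be collected into two
   functions (no choice axiom is needed since the index range is finite). *)
Lemma choose_pairs (A : Type) (a0 : A) (P : nat -> A -> A -> Prop) n :
  (forall i, (1 <= i <= n)%N -> exists x y, P i x y) ->
  exists f g : nat -> A, forall i, (1 <= i <= n)%N -> P i (f i) (g i).
Proof.
move=> ex.
have [h hP] : exists h : 'I_n.+1 -> A * A,
    forall j : 'I_n.+1, (0 < j)%N -> P j (h j).1 (h j).2.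
  apply: (@fin_all_exists _ (fun _ => (A * A)%type)
            (fun (j : 'I_n.+1) u => (0 < j)%N -> P j u.1 u.2)) => j.
  case: (posnP j) => [-> | j0]; first by exists (a0, a0).
  have jn : (0 < j <= n)%N by rewrite j0 -ltnS ltn_ord.
  by have [x [y Pxy]] := ex j jn; exists (x, y).
exists (fun i => (h (inord i)).1), (fun i => (h (inord i)).2) => i /andP [i0 iN].
by have := hP (inord i); rewrite inordK ?ltnS //; apply.
Qed.

Section Lemma45Construction.
Variables (V : finType) (e : rel V) (x0 : V) (X Y : seq V) (t : nat).
Variables (Xs Ys QR QB : nat -> seq V).

Hypothesis e_sym : symmetric e.
Hypothesis XY_pair : section_pair e X Y.
Hypothesis t_odd : odd t.
Hypothesis subpairs : forall i, (1 <= i <= t)%N -> subsection_pair e X Y (Xs i) (Ys i).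
Hypothesis ordered : forall i j, (1 <= i)%N -> (i < j)%N -> (j <= t)%N ->
  above X (Xs i) (Xs j) /\ below Y (Ys i) (Ys j).
Hypothesis pieces_ends : forall i, (1 <= i <= t)%N ->
  if odd i then H_path_tops e (Xs i) (Ys i) (QR i) /\ H_path_tops e (Xs i) (Ys i) (QB i)
  else H_path_bottoms e (Xs i) (Ys i) (QR i) /\ H_path_bottoms e (Xs i) (Ys i) (QB i).
Hypothesis QR_longer : forall i, (1 <= i <= t)%N -> (size (QB i) < size (QR i))%N.

Local Notation R := (H_adj e X Y).

Definition xtop i := wstart x0 X (Xs i).
Definition xbot i := wend x0 X (Xs i).
Definition ytop i := wstart x0 Y (Ys i).
Definition ybot i := wend x0 Y (Ys i).

Lemma X_uniq : uniq X.
Proof. by case/and3P: XY_pair => /is_path_uniq. Qed.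

Lemma Y_uniq : uniq Y.
Proof. by case/and3P: XY_pair => _ /is_path_uniq. Qed.

Lemma XY_disjoint v : v \in X -> v \notin Y.
Proof. by case/and3P: XY_pair => _ _ /allP; apply. Qed.

Lemma R_down_X k : (k.+1 < size X)%N -> R (nth x0 X k) (nth x0 X k.+1).
Proof. by move=> kX; rewrite /H_adj path_edge_nth. Qed.

Lemma R_up_Y k : (k.+1 < size Y)%N -> R (nth x0 Y k.+1) (nth x0 Y k).
Proof. by move=> kY; rewrite /H_adj (path_edge_sym Y) path_edge_nth ?orbT. Qed.

Lemma subpair_facts i : (1 <= i <= t)%N ->
  [/\ infix (Xs i) X, infix (Ys i) Y, Xs i != [::], Ys i != [::]
    & forall v, v \in Xs i -> v \notin Ys i].
Proof.
case/subpairs/and3P => /and3P [pX pY /allP dis] iX iY.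
by split => //; [case: (Xs i) pX | case: (Ys i) pY].
Qed.

Lemma X_windows i : (1 <= i <= t)%N -> (xtop i <= xbot i < size X)%N.
Proof. by case/subpair_facts => iX _ nX _ _; case: (infix_window x0 X_uniq iX nX). Qed.

Lemma Y_windows i : (1 <= i <= t)%N -> (ytop i <= ybot i < size Y)%N.
Proof. by case/subpair_facts => _ iY _ nY _; case: (infix_window x0 Y_uniq iY nY). Qed.

Lemma windows_ordered i : (1 <= i < t)%N ->
  (xbot i < xtop i.+1)%N /\ (ybot i.+1 < ytop i)%N.
Proof.
case/andP => i1 it; have [ab be] := ordered i1 (ltnSn i) it.
have /subpair_facts [iX iY nX nY _] : (1 <= i <= t)%N by rewrite i1 ltnW.
have /subpair_facts [iX' iY' nX' nY' _] : (1 <= i.+1 <= t)%N by rewrite it.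
split; first exact: above_window X_uniq iX iX' nX nX' ab.
by apply: above_window Y_uniq iY' iY nY' nY _ => u v uY vY; apply: be.
Qed.

Local Notation entry := (entry x0 X Y xtop ybot).
Local Notation exit := (exit x0 X Y xbot ytop).
Local Notation piece := (piece x0 R X Y xtop xbot ytop ybot).

Lemma entry_exit i : (1 <= i <= t)%N ->
  entry i = (if odd i then head x0 (Xs i) else last x0 (Ys i)) /\
  exit i = (if odd i then head x0 (Ys i) else last x0 (Xs i)).
Proof.
case/subpair_facts => iX iY nX nY _.
have [_ hX lX _] := infix_window x0 X_uniq iX nX.
have [_ hY lY _] := infix_window x0 Y_uniq iY nY.
by rewrite /entry /exit /xtop /xbot /ytop /ybot hX lX hY lY; case: (odd i).
Qed.

Definition joins i Q :=
  if odd i then H_path_tops e (Xs i) (Ys i) Q else H_path_bottoms e (Xs i) (Ys i) Q.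

Lemma pieces_join i : (1 <= i <= t)%N -> joins i (QR i) /\ joins i (QB i).
Proof. by move/pieces_ends; rewrite /joins; case: (odd i). Qed.

Lemma H_piece i Q : (1 <= i <= t)%N -> joins i Q ->
  piece i (orient Q (entry i)) /\ (2 <= size Q <= size (Xs i) + size (Ys i))%N.
Proof.
move=> it /(H_path_ends x0) hQ; have [en ex] := entry_exit it.
have [iX iY nX nY dis] := subpair_facts it.
have [_ _ _ wX] := infix_window x0 X_uniq iX nX.
have [_ _ _ wY] := infix_window x0 Y_uniq iY nY.
have mem_ends s : s != [::] -> head x0 s \in s /\ last x0 s \in s.
  by case: s => //= y s _; rewrite mem_head mem_last.
have [[hXs lXs] [hYs lYs]] := (mem_ends _ nX, mem_ends _ nY).
split; last first.
  apply: H_path_size hQ _; case: (odd i).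
    by apply: contraNneq (dis _ hXs) => ->.
  by apply: contraNneq (dis _ lXs) => <-.
case/andP: hQ => /(path_between_sub (H_adj_infix iX iY)) pQ inQ.
have := orient_path_from (H_adj_sym X Y e_sym) pQ; rewrite -en -ex.
case: (orient Q (entry i)) (mem_orient Q (entry i)) => // y r mem; rewrite /piece.
case/and3P => -> /andP [-> ->] ->; apply/allP => v; rewrite mem.
case/(allP inQ)/orP => [/wX | /wY] inw; rewrite /window ?inw ?orbT //.
Qed.

Definition pick k i := orient (if (i <= k)%N then QR i else QB i) (entry i).

Lemma pick_admissible k : admissible x0 R X Y t xtop xbot ytop ybot (pick k).
Proof.
move=> i it; have [eR eB] := pieces_join it.
by rewrite /pick; case: (i <= k)%N; [case: (H_piece it eR) | case: (H_piece it eB)].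
Qed.

Definition zig k := zigzag x0 X Y t xtop xbot ytop ybot (pick k).

Lemma zig_tops k : H_path_tops e X Y (zig k).
Proof.
have [/and3P [u p expl] lw] := zigzag_explores X_uniq Y_uniq XY_disjoint R_down_X R_up_Y
  X_windows Y_windows windows_ordered t_odd (pick_admissible k).
case/and3P: XY_pair => pX pY _.
apply: H_path_tops_intro; [by case: (X) pX | by case: (Y) pY | by apply/andP | by [] |].
by apply: sub_all expl => v /orP [/andP [-> _] | /andP [-> _]]; rewrite ?orbT.
Qed.

Local Open Scope ring_scope.

Lemma zig_size_diff j k : (j <= k <= t)%N ->
  (size (zig k))%:Z - (size (zig j))%:Z =
  \sum_(j.+1 <= i < k.+1) ((size (QR i))%:Z - (size (QB i))%:Z).
Proof.
move=> jkt; rewrite (zigzag_size_diff (pick_admissible k) (pick_admissible j)).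
rewrite -(sum_threshold _ _ jkt); apply: eq_bigr => i _.
by rewrite /pick !size_orient; case: (i <= k)%N; case: (i <= j)%N.
Qed.

Lemma piece_gap_le i : (1 <= i <= t)%N ->
  (size (QR i) <= size (QB i) + ((size (Xs i)).-1 + (size (Ys i)).-1))%N.
Proof.
move=> it; have [iX iY nX nY _] := subpair_facts it.
have [eR eB] := pieces_join it.
have [[_ /andP [_ szR]] [_ /andP [szB _]]] := (H_piece it eR, H_piece it eB).
by case: (Xs i) nX szR => // ? ?; case: (Ys i) nY => // ? ? /=; lia.
Qed.

(* Consecutive zigzags of the schedule k_m = 2m - 3 differ by one or two
   differences |Q_i^R| - |Q_i^B|, hence by between 1 and 2D. *)
Lemma zig_gap m : (1 <= m <= (t + 1)./2)%N ->
  1 <= (size (zig (m.+1.*2 - 3)))%:Z - (size (zig (m.*2 - 3)))%:Z <=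
       2 * (\max_(1 <= i < t.+1) ((size (Xs i)).-1 + (size (Ys i)).-1))%:Z.
Proof.
move=> mt; rewrite zig_size_diff; last by move: t_odd mt; lia.
apply: short_sum_bounds => [|i ii]; first lia.
have it : (1 <= i <= t)%N by move: t_odd mt ii; lia.
have := piece_gap_le it; have := QR_longer it.
have : ((size (Xs i)).-1 + (size (Ys i)).-1 <=
        \max_(1 <= i < t.+1) ((size (Xs i)).-1 + (size (Ys i)).-1))%N.
  apply: (@leq_bigmax_seq _ _ xpredT (fun i => ((size (Xs i)).-1 + (size (Ys i)).-1)%N)) => //.
  by rewrite mem_index_iota ltnS.
lia.
Qed.

End Lemma45Construction.

Unset Implicit Arguments.

Theorem lemma4p5 (V : finType) (e : rel V)
  (e_sym : symmetric e) (e_irr : irreflexive e)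
  (X Y : seq V) (t : nat) (Xs Ys : nat -> seq V) (d : nat -> nat) :
  section_pair e X Y ->
  odd t -> (1 <= t)%N ->
  (forall i, (1 <= i <= t)%N -> subsection_pair e X Y (Xs i) (Ys i)) ->
  (forall i j, (1 <= i <= t)%N -> (1 <= j <= t)%N -> i <> j ->
     all (fun v => v \notin Xs j) (Xs i) /\ all (fun v => v \notin Ys j) (Ys i)) ->
  (forall i j, (1 <= i)%N -> (i < j)%N -> (j <= t)%N ->
     above X (Xs i) (Xs j) /\ below Y (Ys i) (Ys j)) ->
  (forall i, (1 <= i <= t)%N -> (1 <= d i)%N) ->
  (forall i, (1 <= i <= t)%N ->
     exists QR QB : seq V,
       ((size QR)%:Z - (size QB)%:Z >= (d i)%:Z)%R /\
       (if odd i then H_path_tops e (Xs i) (Ys i) QR /\ H_path_tops e (Xs i) (Ys i) QB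
        else H_path_bottoms e (Xs i) (Ys i) QR /\ H_path_bottoms e (Xs i) (Ys i) QB)) ->
  let D := (\max_(1 <= i < t.+1) ((size (Xs i)).-1 + (size (Ys i)).-1))%N in
  exists P : nat -> seq V,
    (forall i, (1 <= i <= (t + 3)./2)%N -> H_path_tops e X Y (P i)) /\
    ((size (P ((t + 3)./2)))%:Z - (size (P 1%N))%:Z >= (\sum_(1 <= i < t.+1) d i)%:Z)%R /\
    (forall i, (1 <= i <= (t + 1)./2)%N ->
       (1 <= (size (P i.+1))%:Z - (size (P i))%:Z <= 2 * D%:Z)%R).
Proof.
move=> XY t_odd _ subpairs _ ordered d_pos pairs D.
have [QR [QB HQ]] := choose_pairs [::] pairs.
have x0 : V by move: XY; rewrite /section_pair; case: (X). (* X is nonempty *)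
have ends i (it : (1 <= i <= t)%N) := proj2 (HQ i it).
have longer i (it : (1 <= i <= t)%N) : (size (QB i) < size (QR i))%N.
  by have := proj1 (HQ i it); have := d_pos i it; lia.
pose P m := zig x0 X Y t Xs Ys QR QB (m.*2 - 3).
exists P; split; [|split].
- by move=> m _; apply: (zig_tops x0 e_sym XY t_odd subpairs ordered ends).
- rewrite /P (_ : ((t + 3)./2).*2 - 3 = t); last by move: t_odd; lia.
  rewrite (zig_size_diff x0 e_sym XY subpairs ends) //= -natz natr_sum.
  by apply: ler_sum_nat => i it; rewrite natz; case: (HQ i it).
- by move=> m; apply: (zig_gap x0 e_sym XY t_odd subpairs ends longer).
Qed.
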